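(* Let $n\ge 2$, let $\mathcal{Y}=\{C^{(1)},\dots,C^{(n)}\}$ be a set of classes, let $E$ be a set of ordered pairs of distinct classes, and let $g:E\to\mathbb{R}$. Then the following are equivalent: (a) there exist a finite alphabet $\mathcal{U}=[k]$, a probability table $\{\mathbf{p}_u\}_{u\in\mathcal{U}}$ with every $\mathbf{p}_u\in(0,1)^n$ and $\sum_i p_u^{(i)}=1$, and a probability distribution $d$ on $\mathcal{U}$ such that $f_d(e)=g(e)$ for all $e\in E$; (b) there exists a point $x$ in the interior $\mathrm{Co}(\mathcal{H_R})$ of the linear ordering polytope such that $x(e)=g(e)$ for all $e\in E$.
   Context: Situational opinions: for $u\in\mathcal{U}$ and distinct $i,j$, $f_u(C^{(i)},C^{(j)})=p_u^{(i)}/(p_u^{(i)}+p_u^{(j)})$. Overall opinions (expert graph edge-weights): $f_d(e)=\sum_{u\in\mathcal{U}}d(u)f_u(e)$. Rankings: for a permutation $r=(r_1,\dots,r_n)$ of $[n]$, the ranking graph has weights $f_r(C^{(r_a)},C^{(r_b)})=1$ if $a<b$ and $0$ if $a>b$. Identify any weighting $x$ of ordered pairs satisfying $x(C^{(j)},C^{(i)})=1-x(C^{(i)},C^{(j)})$ with the vector $(x(C^{(i)},C^{(j)}))_{i<j}\in\mathbb{R}^{n(n-1)/2}$. The linear ordering polytope is the convex hull of the $n!$ vectors $f_r$; $\mathrm{Co}(\mathcal{H_R})$ denotes its (open) interior in $\mathbb{R}^{n(n-1)/2}$, i.e. the open convex hull of the ranking vectors. *)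

From HB Require Import structures.
From mathcomp Require Import all_boot all_order all_algebra all_fingroup.
From mathcomp Require Import reals.
Set Implicit Arguments. Unset Strict Implicit. Unset Printing Implicit Defensive.
Import Order.TTheory GRing.Theory Num.Theory.
Local Open Scope ring_scope.

Definition sit_opinion (R : realType) (n : nat) (pu : 'I_n -> R) (i j : 'I_n) : R :=
  pu i / (pu i + pu j).

Definition overall_opinion (R : realType) (n k : nat) (p : 'I_k -> 'I_n -> R)
  (d : 'I_k -> R) (i j : 'I_n) : R :=
  \sum_(u < k) d u * sit_opinion (p u) i j.

(* Ranking graph of the permutation r = (r_1,...,r_n) (r maps positions to
   classes): f_r(C^(r_a), C^(r_b)) = 1 if a < b, 0 if a > b. The position of
   class i is r^-1 i. *)
Definition ranking_weight {R : realType} (n : nat) (r : {perm 'I_n}) (i j : 'I_n) : R :=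
  if (val (r^-1)%g i < val (r^-1)%g j)%N then 1 else 0.

(* Weightings of ordered pairs are identified with vectors (x(i,j))_{i<j} in
   R^{n(n-1)/2}; only the coordinates with i < j matter below. *)

Definition in_LOP (R : realType) (n : nat) (y : 'I_n -> 'I_n -> R) : Prop :=
  exists lam : {perm 'I_n} -> R,
    (forall r, 0 <= lam r) /\ \sum_r lam r = 1 /\
    forall i j : 'I_n, (i < j)%N -> y i j = \sum_r lam r * ranking_weight (R:=R) r i j.

Definition in_LOP_interior (R : realType) (n : nat) (x : 'I_n -> 'I_n -> R) : Prop :=
  exists eps : R, 0 < eps /\
    forall y : 'I_n -> 'I_n -> R,
      (forall i j : 'I_n, (i < j)%N -> `|y i j - x i j| < eps) -> in_LOP y.

From HB Require Import structures.
From mathcomp Require Import all_boot all_order all_algebra all_fingroup.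
From mathcomp Require Import reals.
From mathcomp Require Import ring lra.
Set Implicit Arguments. Unset Strict Implicit. Unset Printing Implicit Defensive.
Import Order.TTheory GRing.Theory Num.Theory.
Local Open Scope ring_scope.

(* (a) => (b): by Luce's choice axiom, p_i / (p_i + p_j) is the probability
   that i precedes j in the Plackett-Luce random ranking with weights p, which
   charges every ranking.  Hence f_d is a convex combination of all ranking
   vectors with positive weights, and such a point is interior: the two
   rankings placing a and b first and second, in either order, differ only in
   the coordinate (a, b), so shifting weight between them moves x along that
   coordinate axis.
   (b) => (a): overall opinions form a convex set (merge the alphabets), and
   the opinion of the vector p_i ~ e ^ (position of i in r) is e-close to the
   ranking r.  So the corners x +- eps/2 of a box around an interior point x
   are approximated by overall opinions lying in the respective open orthants
   at x, and a convex set meeting every open orthant at x contains x. *)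

Lemma big_permutations (V : nmodType) (T : eqType) (s : seq T) (F : seq T -> V) :
  uniq s -> s != [::] ->
  \sum_(o <- permutations s) F o =
  \sum_(x <- s) \sum_(t <- permutations (rem x s)) F (x :: t).
Proof.
move=> s_uniq s_neq0; have s_gt0 : (0 < size s)%N by case: s s_neq0 {s_uniq}.
by rewrite (perm_big _ (permutationsE s_gt0)) big_allpairs_dep undup_id.
Qed.

Lemma perm_cons_rem (T : eqType) (s t : seq T) x :
  x \in s -> t \in permutations (rem x s) -> perm_eq (x :: t) s.
Proof.
rewrite mem_permutations => xs t_perm.
by rewrite perm_sym (perm_trans (perm_to_rem xs)) // perm_cons perm_sym.
Qed.

Section PlackettLuce.
Variables (R : realType) (T : eqType) (p : T -> R).
Hypothesis p_gt0 : forall x, 0 < p x.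

Fixpoint plackett_luce (o : seq T) : R :=
  if o is x :: t then p x / (\sum_(y <- o) p y) * plackett_luce t else 1.

Lemma sum_cons_gt0 x s : 0 < \sum_(y <- x :: s) p y.
Proof.
rewrite big_cons ltr_pwDl //; apply: sumr_ge0 => y _; exact: ltW.
Qed.

Lemma plackett_luce_gt0 o : 0 < plackett_luce o.
Proof.
elim: o => [|x o IH] /=; first exact: ltr01.
by rewrite mulr_gt0 ?divr_gt0 ?sum_cons_gt0 ?p_gt0.
Qed.

Lemma plackett_luce_cons s x t : x \in s -> t \in permutations (rem x s) ->
  plackett_luce (x :: t) = p x / (\sum_(y <- s) p y) * plackett_luce t.
Proof. by move=> xs t_perm /=; rewrite (perm_big _ (perm_cons_rem xs t_perm)). Qed.

Lemma sum_plackett_luce s : uniq s -> \sum_(o <- permutations s) plackett_luce o = 1.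
Proof.
move sz: (size s) => m; elim: m s sz => [|m IH] [|x0 s0] //.
  by move=> _ _ /=; rewrite big_seq1.
move=> [sz] us.
set s := x0 :: s0 in us *; have s_gt0 : 0 < \sum_(y <- s) p y by exact: sum_cons_gt0.
rewrite big_permutations // -[RHS](divff (lt0r_neq0 s_gt0)) mulr_suml.
apply: eq_big_seq => x xs.
rewrite (eq_big_seq _ (fun t => plackett_luce_cons xs)) -mulr_sumr IH ?mulr1 //.
  by rewrite size_rem.
exact: rem_uniq.
Qed.

Lemma sum_first_choice s i j : uniq s -> i \in s -> j \in s -> i != j ->
  \sum_(x <- s) p x * (if x == i then 1 else if x == j then 0 else p i / (p i + p j))
  = p i / (p i + p j) * \sum_(x <- s) p x.
Proof.
set q := p i / (p i + p j) => us iS jS ij.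
have jr : j \in rem i s by rewrite (mem_rem_uniq _ us) inE eq_sym ij.
rewrite (big_rem _ iS) [in RHS](big_rem _ iS) (big_rem _ jr) [in RHS](big_rem _ jr).
rewrite /= eqxx eq_sym (negbTE ij) eqxx mulr1 mulr0 add0r !mulrDr mulr_sumr.
have -> : \sum_(x <- rem j (rem i s)) p x * (if x == i then 1 else if x == j then 0 else q)
        = \sum_(x <- rem j (rem i s)) q * p x.
  apply: eq_big_seq => x.
  rewrite (mem_rem_uniq _ (rem_uniq _ us)) inE (mem_rem_uniq _ us) !inE.
  by case/andP => /negbTE -> /andP [/negbTE -> _]; rewrite mulrC.
rewrite addrA; congr (_ + _); rewrite /q -mulrDr mulrAC mulfK //.
by rewrite lt0r_neq0 ?addr_gt0.
Qed.

Lemma plackett_luce_before s i j : uniq s -> i \in s -> j \in s -> i != j ->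
  \sum_(o <- permutations s) plackett_luce o * (index i o < index j o)%:R
  = p i / (p i + p j).
Proof.
move sz: (size s) => m; elim: m s sz => [|m IH] [|x0 s0] // [sz] us iS jS ij.
set s := x0 :: s0 in us iS jS *; set q := p i / (p i + p j); set S := \sum_(y <- s) p y.
have S_neq0 : S != 0 by rewrite lt0r_neq0 ?sum_cons_gt0.
rewrite big_permutations // -[RHS](mulfK S_neq0).
rewrite -(sum_first_choice us iS jS ij) -/q mulr_suml; apply: eq_big_seq => x xs.
transitivity (p x / S *
  \sum_(t <- permutations (rem x s)) plackett_luce t * (index i (x :: t) < index j (x :: t))%:R).
  by rewrite mulr_sumr; apply: eq_big_seq => t /(plackett_luce_cons xs) ->; rewrite -/S mulrA.
rewrite mulrAC; congr (_ * _ / _).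
case: (eqVneq x i) => [-> | xi].
  under eq_bigr do rewrite /= eqxx (negbTE ij) mulr1.
  exact: sum_plackett_luce (rem_uniq _ us).
case: (eqVneq x j) => [-> | xj].
  by rewrite big1 // => t _; rewrite /= eqxx mulr0.
under eq_bigr do rewrite /= (negbTE xi) (negbTE xj) ltnS.
apply: IH => //; first by rewrite size_rem.
- exact: rem_uniq.
- by rewrite (mem_rem_uniq _ us) inE eq_sym xi.
- by rewrite (mem_rem_uniq _ us) inE eq_sym xj.
Qed.
End PlackettLuce.

Section PermutationLists.
Variable n : nat.

Lemma map_perm_enum_inj : injective (fun r : {perm 'I_n} => map r (enum 'I_n)).
Proof.
move=> r r' /= eq_rr'; apply/permP => x.
have nth_x (s : {perm 'I_n}) : nth x (map s (enum 'I_n)) (index x (enum 'I_n)) = s x.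
  by rewrite (nth_map x) ?nth_index ?index_mem ?mem_enum.
by rewrite -nth_x eq_rr' nth_x.
Qed.

Lemma perm_eq_enumP (o : seq 'I_n) :
  reflect (exists r : {perm 'I_n}, o = map r (enum 'I_n)) (perm_eq o (enum 'I_n)).
Proof.
rewrite -val_ord_tuple; apply: (iffP tuple_permP) => -[r ->]; exists r.
  by apply: eq_map => i; rewrite tnth_ord_tuple.
by apply/eq_map => i; rewrite tnth_ord_tuple.
Qed.

Lemma big_perm_enum (V : nmodType) (F : seq 'I_n -> V) :
  \sum_(r : {perm 'I_n}) F (map r (enum 'I_n)) = \sum_(o <- permutations (enum 'I_n)) F o.
Proof.
rewrite -(big_map (fun r : {perm 'I_n} => map r (enum 'I_n)) xpredT F).
apply: perm_big; apply: uniq_perm.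
- by rewrite map_inj_uniq ?index_enum_uniq //; exact: map_perm_enum_inj.
- exact: permutations_uniq.
move=> o; rewrite mem_permutations; apply/mapP/perm_eq_enumP => -[r].
  by move=> _ ->; exists r.
by move=> ->; exists r; first exact: mem_index_enum.
Qed.

Lemma index_map_perm (r : {perm 'I_n}) i : index i (map r (enum 'I_n)) = (r^-1)%g i.
Proof. by rewrite -{1}(permKV r i) index_map ?index_enum_ord //; exact: perm_inj. Qed.
End PermutationLists.

Lemma ranking_weightE (R : realType) n (r : {perm 'I_n}) i j :
  ranking_weight (R:=R) r i j = ((r^-1)%g i < (r^-1)%g j)%:R.
Proof. by rewrite /ranking_weight !pvalE; case: ltnP. Qed.

Lemma sit_opinion_ge0 (R : realType) n (p : 'I_n -> R) i j :
  0 <= p i -> 0 <= p j -> 0 <= sit_opinion p i j.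
Proof. by move=> pi_ge0 pj_ge0; rewrite divr_ge0 ?addr_ge0. Qed.

Lemma sit_opinion_antisym (R : realType) n (p : 'I_n -> R) i j :
  p i + p j != 0 -> sit_opinion p j i = 1 - sit_opinion p i j.
Proof. by move=> pij_neq0; rewrite /sit_opinion addrC; field. Qed.

Section LuceRankings.
Variables (R : realType) (n : nat) (p : 'I_n -> R).
Hypothesis p_gt0 : forall i, 0 < p i.

Definition luce_weight (r : {perm 'I_n}) : R := plackett_luce p (map r (enum 'I_n)).

Lemma luce_weight_gt0 r : 0 < luce_weight r.
Proof. exact: plackett_luce_gt0. Qed.

Lemma sum_luce_weight : \sum_r luce_weight r = 1.
Proof. by rewrite (big_perm_enum (plackett_luce p)) sum_plackett_luce ?enum_uniq. Qed.

Lemma sit_opinion_luce i j : i != j ->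
  sit_opinion p i j = \sum_r luce_weight r * ranking_weight r i j.
Proof.
move=> ij; under eq_bigr do rewrite ranking_weightE -!index_map_perm.
rewrite (big_perm_enum (fun o => plackett_luce p o * (index i o < index j o)%:R)).
by rewrite plackett_luce_before ?enum_uniq ?mem_enum.
Qed.
End LuceRankings.

Section LOPInterior.
Variables (R : realType) (n : nat).
Hypothesis n_gt1 : (1 < n)%N.

Let o0 : 'I_n := Ordinal (ltnW n_gt1).
Let o1 : 'I_n := Ordinal n_gt1.

(* A map from classes to positions: [a] goes first and [b] second.  The
   corresponding ranking is its inverse, and composing with [tperm o0 o1]
   swaps the first two places. *)
Definition leading_pair (a b : 'I_n) : {perm 'I_n} :=
  (tperm a o0 * tperm (tperm a o0 b) o1)%g.

Lemma leading_pair_fst a b : a != b -> leading_pair a b a = o0.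
Proof.
move=> ab; have b'_neq0 : tperm a o0 b != o0.
  by rewrite -{2}(tpermL a o0) (inj_eq perm_inj) eq_sym.
by rewrite permM tpermL (tpermD b'_neq0).
Qed.

Lemma leading_pair_snd a b : leading_pair a b b = o1.
Proof. by rewrite permM tpermL. Qed.

Lemma ltn_tperm01 (u v : 'I_n) :
  (u < v)%:R - (tperm o0 o1 u < tperm o0 o1 v)%:R
  = ((u, v) == (o0, o1))%:R - ((u, v) == (o1, o0))%:R :> R.
Proof.
have gt1 (k : 'I_n) : k != o0 -> k != o1 -> (1 < k)%N by case: k => -[|[|k]].
case: tpermP => [-> | -> | /eqP u0 /eqP u1]; case: tpermP => [-> | -> | /eqP v0 /eqP v1];
  rewrite ?xpair_eqE ?eqxx ?andbT ?andbF //=.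
- by have v_gt1 := gt1 v v0 v1; rewrite v_gt1 (ltnW v_gt1) (negbTE v1) /= subrr subr0.
- by have v_gt1 := gt1 v v0 v1; rewrite v_gt1 (ltnW v_gt1) (negbTE v0) /= subrr subr0.
- by have u_gt1 := gt1 u u0 u1; rewrite ltnNge (ltnW u_gt1) (negbTE u1).
- by have u_gt1 := gt1 u u0 u1; rewrite ltnNge (ltnW u_gt1) (negbTE u0).
- by rewrite (negbTE u0) (negbTE u1) !subrr.
Qed.

Definition pair_direction (a b : 'I_n) (r : {perm 'I_n}) : R :=
  (r == ((leading_pair a b)^-1)%g)%:R - (r == ((leading_pair a b * tperm o0 o1)^-1)%g)%:R.

Lemma sum_pair_direction_mul a b (F : {perm 'I_n} -> R) :
  \sum_r pair_direction a b r * F r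
  = F ((leading_pair a b)^-1)%g - F ((leading_pair a b * tperm o0 o1)^-1)%g.
Proof.
under eq_bigr do rewrite mulrBl !mulr_natl !mulrb.
by rewrite sumrB -!big_mkcond !big_pred1_eq.
Qed.

Lemma sum_pair_direction a b : \sum_r pair_direction a b r = 0.
Proof.
under eq_bigr do rewrite -[pair_direction _ _ _]mulr1.
by rewrite sum_pair_direction_mul subrr.
Qed.

Lemma norm_pair_direction_le1 a b r : `|pair_direction a b r| <= 1.
Proof.
rewrite /pair_direction; do 2 case: eqP => _;
  by rewrite /= ?subrr ?subr0 ?sub0r ?normrN ?normr0 ?normr1.
Qed.

Lemma pair_direction_ranking (a b i j : 'I_n) : (a < b)%N -> (i < j)%N ->
  \sum_r pair_direction a b r * ranking_weight r i j = ((i, j) == (a, b))%:R.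
Proof.
move=> ab ij; set s := leading_pair a b.
have a_neq_b : a != b by rewrite neq_ltn ab.
have sE0 k : (s k == o0) = (k == a) by rewrite -(leading_pair_fst a_neq_b) (inj_eq perm_inj).
have sE1 k : (s k == o1) = (k == b) by rewrite -(leading_pair_snd a b) (inj_eq perm_inj).
rewrite sum_pair_direction_mul !ranking_weightE !invgK !(permM s) ltn_tperm01.
rewrite !xpair_eqE !sE0 !sE1.
suff -> : (i == b) && (j == a) = false by rewrite subr0.
by apply/negbTE; apply: contraTN ij => /andP[/eqP-> /eqP->]; rewrite -leqNgt ltnW.
Qed.

Lemma LOP_interior_of_pos_weights (x : 'I_n -> 'I_n -> R) (L : {perm 'I_n} -> R) :
  (forall r, 0 < L r) -> \sum_r L r = 1 ->
  (forall i j : 'I_n, (i < j)%N -> x i j = \sum_r L r * ranking_weight r i j) ->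
  in_LOP_interior x.
Proof.
move=> L_gt0 L_sum1 xE.
have [r0 _ L_min] := @arg_minP _ _ _ 1%g xpredT L isT; set c := L r0 in L_min.
pose N : R := (n * n)%:R.
have N_gt0 : 0 < N by rewrite ltr0n muln_gt0 andbb (ltn_trans _ n_gt1).
exists (c / N); split; first by rewrite divr_gt0 ?L_gt0.
move=> y y_near.
pose P (k : 'I_n * 'I_n) := (k.1 < k.2)%N.
pose dy (k : 'I_n * 'I_n) := y k.1 k.2 - x k.1 k.2.
pose D r := \sum_(k | P k) dy k * pair_direction k.1 k.2 r.
have D_le r : `|D r| <= c.
  apply: le_trans (ler_norm_sum _ _ _) _.
  apply: le_trans (_ : \sum_(k : 'I_n * 'I_n) c / N <= _); last first.
    by rewrite sumr_const card_prod card_ord -mulr_natr divfK ?lt0r_neq0.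
  rewrite [X in _ <= X](bigID P) /= ler_wpDr ?sumr_ge0 //.
    by rewrite ltW ?divr_gt0 ?L_gt0.
  apply: ler_sum => k Pk; rewrite normrM -[X in _ <= X]mulr1.
  by rewrite ler_pM ?normr_ge0 ?norm_pair_direction_le1 ?ltW ?y_near.
exists (fun r => L r + D r); split; [|split].
- move=> r; move: (D_le r); rewrite ler_norml => /andP[D_lo _].
  by have := L_min r isT; lra.
- rewrite big_split /= L_sum1 exchange_big /= big1 ?addr0 // => k _.
  by rewrite -mulr_sumr sum_pair_direction mulr0.
move=> i j ij; under eq_bigr do rewrite mulrDl mulr_suml.
rewrite big_split /= -xE // exchange_big /=.
rewrite (eq_bigr (fun k => dy k * ((i, j) == k)%:R)) => [|[a b] /= ab]; last first.
  by under eq_bigr do rewrite -mulrA; rewrite -mulr_sumr pair_direction_ranking.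
rewrite (bigD1 (i, j)) //= eqxx mulr1 big1 ?addr0 => [|k /andP[_ /negbTE]]; last first.
  by rewrite eq_sym => ->; rewrite mulr0.
by rewrite /dy /= addrC subrK.
Qed.
End LOPInterior.

Section OverallOpinions.
Variables (R : realType) (n : nat).

Definition opinion_profile k (p : 'I_k -> 'I_n -> R) (d : 'I_k -> R) : Prop :=
  [/\ forall u i, 0 < p u i < 1, forall u, \sum_i p u i = 1,
      forall u, 0 <= d u & \sum_u d u = 1].

Definition is_overall_opinion (z : 'I_n -> 'I_n -> R) : Prop :=
  exists k (p : 'I_k -> 'I_n -> R) (d : 'I_k -> R),
    opinion_profile p d /\ z =2 overall_opinion p d.

Lemma overall_opinion_antisym k (p : 'I_k -> 'I_n -> R) d :
  (forall u i, 0 < p u i) -> \sum_u d u = 1 ->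
  forall i j, overall_opinion p d j i = 1 - overall_opinion p d i j.
Proof.
move=> p_gt0 d_sum1 i j; rewrite /overall_opinion -[X in _ = X - _]d_sum1 -sumrB.
by apply: eq_bigr => u _; rewrite sit_opinion_antisym ?lt0r_neq0 ?addr_gt0 // mulrBr mulr1.
Qed.

Lemma is_overall_opinion_convex a b t : is_overall_opinion a -> is_overall_opinion b ->
  0 <= t <= 1 -> is_overall_opinion (fun i j => t * a i j + (1 - t) * b i j).
Proof.
move=> [k1 [p1 [d1 [[p1_01 p1_sum1 d1_ge0 d1_sum1] aE]]]].
move=> [k2 [p2 [d2 [[p2_01 p2_sum1 d2_ge0 d2_sum1] bE]]]] /andP[t_ge0 t_le1].
pose p u := match split u with inl u1 => p1 u1 | inr u2 => p2 u2 end.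
pose d u := match split u with inl u1 => t * d1 u1 | inr u2 => (1 - t) * d2 u2 end.
have pl u : p (lshift k2 u) = p1 u by rewrite /p (unsplitK (inl u)).
have pr u : p (rshift k1 u) = p2 u by rewrite /p (unsplitK (inr u)).
have dl u : d (lshift k2 u) = t * d1 u by rewrite /d (unsplitK (inl u)).
have dr u : d (rshift k1 u) = (1 - t) * d2 u by rewrite /d (unsplitK (inr u)).
exists (k1 + k2), p, d; split; first split.
- by move=> u i; rewrite /p; case: split.
- by move=> u; rewrite /p; case: split.
- by move=> u; rewrite /d; case: split => v; rewrite mulr_ge0 ?subr_ge0.
- rewrite big_split_ord (eq_bigr _ (fun u _ => dl u)) (eq_bigr _ (fun u _ => dr u)).
  by rewrite -!mulr_sumr d1_sum1 d2_sum1 !mulr1; apply: subrKC.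
move=> i j; rewrite /overall_opinion big_split_ord aE bE !mulr_sumr.
by congr (_ + _); apply: eq_bigr => u _; rewrite ?dl ?pl ?dr ?pr mulrA.
Qed.

Lemma is_overall_opinion_mixture (T : finType) (lam : T -> R) (P : T -> 'I_n -> R) :
  (forall t, 0 <= lam t) -> \sum_t lam t = 1 ->
  (forall t i, 0 < P t i < 1) -> (forall t, \sum_i P t i = 1) ->
  is_overall_opinion (fun i j => \sum_t lam t * sit_opinion (P t) i j).
Proof.
move=> lam_ge0 lam_sum1 P_01 P_sum1.
exists #|T|, (fun u => P (enum_val u)), (fun u => lam (enum_val u)).
split; first by split; rewrite // -lam_sum1 -(big_enum_val lam); apply: eq_bigl.
move=> i j; rewrite /overall_opinion -(big_enum_val (fun t => lam t * sit_opinion (P t) i j)).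
exact: eq_bigl.
Qed.
End OverallOpinions.

Section ConvexOrthants.
Variables (R : realType) (T : eqType).

Definition convex_set (C : (T -> R) -> Prop) : Prop :=
  forall a b t, C a -> C b -> 0 <= t <= 1 -> C (fun k => t * a k + (1 - t) * b k).

(* Induction on [S]: combining a point with z m > x m and one with z m < x m
   in the same orthant of the other coordinates fixes the coordinate m. *)
Lemma convex_meets_orthants (C : (T -> R) -> Prop) (x : T -> R) (S : seq T) :
  convex_set C -> uniq S ->
  (forall s : T -> bool, exists2 z, C z &
     {in S, forall k, if s k then x k < z k else z k < x k}) ->
  exists2 z, C z & {in S, z =1 x}.
Proof.
elim: S C => [|m S IH] C C_convex /=.
  by move=> _ /(_ xpredT) [z Cz _]; exists z.
case/andP => mS S_uniq orth.
pose Cm z := C z /\ z m = x m.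
have Cm_convex : convex_set Cm.
  move=> a b t [Ca am] [Cb bm] t01; split; first exact: C_convex.
  by rewrite am bm; ring.
have [s|z [Cz zm] zS] := IH Cm Cm_convex S_uniq; last first.
  by exists z => // k; rewrite inE => /orP[/eqP -> | /zS].
have [z1 C1 z1S] := orth (fun k => if k == m then true else s k).
have [z0 C0 z0S] := orth (fun k => if k == m then false else s k).
move: (z1S m (mem_head _ _)) (z0S m (mem_head _ _)); rewrite eqxx /= => z1m z0m.
pose t := (x m - z0 m) / (z1 m - z0 m).
have t_gt0 : 0 < t by rewrite divr_gt0 ?subr_gt0 // (lt_trans z0m).
have t_lt1 : t < 1 by rewrite ltr_pdivrMr ?subr_gt0 ?(lt_trans z0m) // mul1r ltrD2r.
exists (fun k => t * z1 k + (1 - t) * z0 k).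
  split; first by apply: C_convex => //; rewrite !ltW.
  by rewrite /t; field; rewrite subr_eq0 gt_eqF ?(lt_trans z0m).
move=> k kS; have km : k != m by apply: contraNneq mS => <-.
move: (z1S k) (z0S k); rewrite inE kS orbT (negbTE km) => /(_ isT) + /(_ isT).
by case: (s k) => z1k z0k; nra.
Qed.
End ConvexOrthants.

Section PeakedOpinions.
Variables (R : realType) (n : nat).
Hypothesis n_gt1 : (1 < n)%N.

Definition peaked (e : R) (r : {perm 'I_n}) (i : 'I_n) : R :=
  e ^+ (r^-1)%g i / \sum_k e ^+ (r^-1)%g k.

Variable e : R.
Hypotheses (e_gt0 : 0 < e) (e_lt1 : e < 1).

Let sum_gt0 (r : {perm 'I_n}) : 0 < \sum_k e ^+ (r^-1)%g k.
Proof.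
rewrite (bigD1 (Ordinal n_gt1)) //= ltr_pwDl ?exprn_gt0 //.
by apply: sumr_ge0 => k _; rewrite exprn_ge0 ?ltW.
Qed.

Lemma peaked_01 r i : 0 < peaked e r i < 1.
Proof.
rewrite divr_gt0 ?exprn_gt0 ?sum_gt0 //= ltr_pdivrMr ?sum_gt0 // mul1r.
have [k ki] : exists k : 'I_n, k != i.
  case: (eqVneq i (Ordinal n_gt1)) => [-> | i_neq]; first by exists (Ordinal (ltnW n_gt1)).
  by exists (Ordinal n_gt1); rewrite eq_sym.
rewrite (bigD1 i) //= ltrDl (bigD1 k) //= ltr_pwDl ?exprn_gt0 //.
by apply: sumr_ge0 => l _; rewrite exprn_ge0 ?ltW.
Qed.

Lemma sum_peaked r : \sum_i peaked e r i = 1.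
Proof. by rewrite -mulr_suml divff ?lt0r_neq0 ?sum_gt0. Qed.

Lemma sit_opinion_peaked_le (r : {perm 'I_n}) i j : ((r^-1)%g j < (r^-1)%g i)%N ->
  sit_opinion (peaked e r) i j <= e.
Proof.
move=> ji; set a := e ^+ (r^-1)%g i; set b := e ^+ (r^-1)%g j.
have [a_gt0 b_gt0] : 0 < a /\ 0 < b by rewrite !exprn_gt0.
have -> : sit_opinion (peaked e r) i j = a / (a + b).
  have S_neq0 := lt0r_neq0 (sum_gt0 r).
  have ab_neq0 : a + b != 0 by rewrite lt0r_neq0 ?addr_gt0.
  rewrite /sit_opinion /peaked -/a -/b; move: S_neq0; set S := \sum_k _ => S_neq0.
  by field; rewrite S_neq0 ab_neq0.
have a_le : a <= e * b by rewrite -exprS ler_wiXn2l ?ltW.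
rewrite ler_pdivrMr ?addr_gt0 // mulrDr; have : 0 <= e * a by rewrite mulr_ge0 ?ltW.
lra.
Qed.

Lemma sit_opinion_peaked_near r i j : i != j ->
  `|sit_opinion (peaked e r) i j - ranking_weight r i j| <= e.
Proof.
move=> ij; have p_gt0 k : 0 < peaked e r k by case/andP: (peaked_01 r k).
rewrite ranking_weightE.
case: (ltngtP ((r^-1)%g i : nat) ((r^-1)%g j)) => [ij_lt | ji_lt | /val_inj/perm_inj ij_eq].
- rewrite /= -opprB normrN -sit_opinion_antisym ?lt0r_neq0 ?addr_gt0 //.
  by rewrite ger0_norm ?sit_opinion_ge0 ?(ltW (p_gt0 _)) //; exact: sit_opinion_peaked_le.
- rewrite /= subr0 ger0_norm ?sit_opinion_ge0 ?(ltW (p_gt0 _)) //.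
  exact: sit_opinion_peaked_le.
- by rewrite ij_eq eqxx in ij.
Qed.
End PeakedOpinions.

Lemma LOP_approx (R : realType) n (y : 'I_n -> 'I_n -> R) e :
  (1 < n)%N -> in_LOP y -> 0 < e ->
  exists2 z, is_overall_opinion z & forall i j : 'I_n, (i < j)%N -> `|z i j - y i j| <= e.
Proof.
move=> n_gt1 [lam [lam_ge0 [lam_sum1 yE]]] e_gt0.
pose e' := Num.min e 2^-1.
have e'_gt0 : 0 < e' by rewrite lt_min e_gt0 invr_gt0 ltr0n.
have e'_lt1 : e' < 1 by rewrite gt_min invf_lt1 ?ltr0n ?ltr1n ?orbT.
have e'_le : e' <= e by rewrite ge_min lexx.
exists (fun i j => \sum_r lam r * sit_opinion (peaked e' r) i j).
  by apply: is_overall_opinion_mixture => // r; [exact: peaked_01 | exact: sum_peaked].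
move=> i j ij; rewrite yE // -sumrB.
apply: le_trans (ler_norm_sum _ _ _) _; apply: le_trans e'_le.
rewrite -[X in _ <= X]mul1r -lam_sum1 mulr_suml; apply: ler_sum => r _.
rewrite -mulrBr normrM ger0_norm //; apply: ler_wpM2l => //.
by apply: sit_opinion_peaked_near; rewrite // neq_ltn ij.
Qed.

Lemma overall_opinion_of_LOP_interior (R : realType) n (x : 'I_n -> 'I_n -> R) :
  (1 < n)%N -> in_LOP_interior x ->
  exists2 z, is_overall_opinion z & forall i j : 'I_n, (i < j)%N -> z i j = x i j.
Proof.
move=> n_gt1 [eps [eps_gt0 box]].
pose S := enum [pred k : 'I_n * 'I_n | (k.1 < k.2)%N].
have S_mem (i j : 'I_n) : ((i, j) \in S) = (i < j)%N by rewrite mem_enum.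
have [||s|z z_opinion zx] := convex_meets_orthants
  (C := fun z => is_overall_opinion (fun i j => z (i, j))) (x := fun k => x k.1 k.2) (S := S).
- by move=> a b t; exact: is_overall_opinion_convex.
- exact: enum_uniq.
- pose y i j := x i j + (if s (i, j) then eps / 2 else - (eps / 2)).
  have [||z z_opinion zy] := LOP_approx (y := y) (e := eps / 4) n_gt1.
  + apply: box => i j _; rewrite /y addrC addKr.
    by case: (s _); rewrite ?normrN ger0_norm; lra.
  + by rewrite divr_gt0.
  exists (fun k => z k.1 k.2) => // -[i j]; rewrite S_mem => ij /=.
  by move: (zy i j ij); rewrite /y ler_norml => /andP[]; case: (s (i, j)); lra.
by exists (fun i j => z (i, j)) => // i j ij; apply: (zx (i, j)); rewrite S_mem.
Qed.

Lemma LOP_interior_overall_opinion (R : realType) n k (p : 'I_k -> 'I_n -> R) d :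
  (1 < n)%N -> (forall u i, 0 < p u i) -> (forall u, 0 <= d u) -> \sum_u d u = 1 ->
  in_LOP_interior (overall_opinion p d).
Proof.
move=> n_gt1 p_gt0 d_ge0 d_sum1.
pose L r := \sum_u d u * luce_weight (p u) r.
have [u0 /andP[_ du0_gt0]] : exists u, true && (0 < d u).
  by apply: psumr_neq0P => //; rewrite d_sum1; apply/eqP; exact: oner_neq0.
apply: (LOP_interior_of_pos_weights n_gt1 (L := L)).
- move=> r; rewrite /L (bigD1 u0) //= ltr_pwDl ?mulr_gt0 ?(luce_weight_gt0 (p_gt0 _)) //.
  by apply: sumr_ge0 => u _; rewrite mulr_ge0 ?(ltW (luce_weight_gt0 (p_gt0 _) _)).
- rewrite /L exchange_big /= -d_sum1; apply: eq_bigr => u _.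
  by rewrite -mulr_sumr (sum_luce_weight (p_gt0 _)) mulr1.
move=> i j ij; rewrite /overall_opinion /L.
under eq_bigr do rewrite (sit_opinion_luce (p_gt0 _)) ?neq_ltn ?ij // mulr_sumr.
rewrite exchange_big; apply: eq_bigr => r _; rewrite mulr_suml.
by apply: eq_bigr => u _; rewrite mulrA.
Qed.

Theorem theorem1 (R : realType) (n : nat) (E : pred ('I_n * 'I_n))
  (g : 'I_n -> 'I_n -> R) :
  (2 <= n)%N ->
  (forall e, E e -> e.1 != e.2) ->
  ((exists (k : nat) (p : 'I_k -> 'I_n -> R) (d : 'I_k -> R),
      (forall u i, 0 < p u i < 1) /\
      (forall u, \sum_(i < n) p u i = 1) /\
      (forall u, 0 <= d u) /\ \sum_(u < k) d u = 1 /\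
      (forall e, E e -> overall_opinion p d e.1 e.2 = g e.1 e.2))
   <->
   (exists x : 'I_n -> 'I_n -> R,
      (forall i j : 'I_n, i != j -> x j i = 1 - x i j) /\
      in_LOP_interior x /\
      (forall e, E e -> x e.1 e.2 = g e.1 e.2))).
Proof.
move=> n_gt1 E_offdiag; split.
- move=> [k [p [d [p_01 [_ [d_ge0 [d_sum1 gE]]]]]]].
  have p_gt0 u i : 0 < p u i by case/andP: (p_01 u i).
  exists (overall_opinion p d); split; last split => //.
    by move=> i j _; apply: overall_opinion_antisym.
  exact: LOP_interior_overall_opinion.
- move=> [x [x_antisym [x_int gE]]].
  have [z [k [p [d [[p_01 p_sum1 d_ge0 d_sum1] zE]]]] zx] :=
    overall_opinion_of_LOP_interior n_gt1 x_int.
  have p_gt0 u i : 0 < p u i by case/andP: (p_01 u i).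
  exists k, p, d; do 4 split => //.
  move=> [i j] /[dup] /E_offdiag /= ij /gE /= <-.
  case: (ltngtP i j) => [lt_ij | lt_ji | /val_inj eq_ij]; last by rewrite eq_ij eqxx in ij.
    by rewrite -zE zx.
  by rewrite overall_opinion_antisym // -zE zx // (x_antisym j i) // eq_sym.
Qed.
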